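(* Let $G$ be a compact matrix Lie group of $n\times n$ unitary matrices with normalized Haar measure $\eta$, let $\epsilon>0$, and let $X=\{x_1,\dots,x_N\}\subset\mathbb{C}^n$ satisfy $x_i\neq x_j$ for $i\neq j$ and $Ax_i\neq x_i$ for all $i$ and all $A\in G$ with $A\neq I$. Let $t$ be a positive integer and let $P^t_{ij}$ be as in the context. Suppose $x_j=Q\cdot x_i$ for some $Q\in G$. Then for all $k,r\in[N]$ and $R\in G$, $$\int_G P^t_{ik}(I,C)\,P^t_{ir}(I,CR)\,d\eta(C)=\int_G P^t_{jk}(I,C)\,P^t_{jr}(I,CR)\,d\eta(C),$$ i.e. $P^t_{i,\cdot}(I,\cdot)\circledast P^t_{i,\cdot}(I,\cdot)=P^t_{j,\cdot}(I,\cdot)\circledast P^t_{j,\cdot}(I,\cdot)$ as functions on $[N]^2\times G$.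
   Context: $[N]=\{1,\dots,N\}$. $W_{ij}(A,B)=e^{-\|Ax_i-Bx_j\|^2/\epsilon}$; $D_{ii}=\sum_{j=1}^N\int_G W_{ij}(I,C)\,d\eta(C)$; $P_{ij}(A,B)=W_{ij}(A,B)/D_{ii}$. $P^1_{ij}=P_{ij}$ and $P^t_{ij}(A,B)=\sum_{k=1}^N\int_G P^{t-1}_{ik}(A,C)P_{kj}(C,B)\,d\eta(C)$ for $t\ge2$. For functions $f,g$ on $[N]\times G$ (written $f(k,C)=f_k(C)$), $f\circledast g$ is the function on $[N]^2\times G$ given by $(f\circledast g)(k,r,R)=\int_G f_k(C)\,g_r(CR)\,d\eta(C)$; $P^t_{i,\cdot}(I,\cdot)$ denotes $(k,C)\mapsto P^t_{ik}(I,C)$. *)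

From HB Require Import structures.
From mathcomp Require Import all_boot all_order all_algebra.
From mathcomp Require Import all_classical all_reals all_analysis.
From mathcomp Require Import complex.
Import numFieldTopology.Exports numFieldNormedType.Exports.
Import Order.TTheory GRing.Theory Num.Theory.

Set Implicit Arguments.
Unset Strict Implicit.
Unset Printing Implicit Defensive.

Local Open Scope classical_set_scope.
Local Open Scope ring_scope.

(* The complex numbers R[i] get their usual (modulus) topology; matrices
   'M[R[i]]_n then carry the product (= usual) topology. *)
HB.instance Definition _ (R : rcfType) := PseudoPointedMetric.copy R[i] (R[i])^o.

Definition borelM (R : realType) (n : nat) :=
  g_sigma_algebraType (@open 'M[R[i]]_n).

Definition adjM (R : realType) (n : nat) (A : 'M[R[i]]_n) : 'M[R[i]]_n :=
  \matrix_(a < n, b < n) Complex (complex.Re (A b a)) (- complex.Im (A b a)).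

Definition unitary (R : realType) (n : nat) (A : 'M[R[i]]_n) : Prop :=
  adjM A *m A = 1%:M.

(* G is a compact matrix Lie group of unitary matrices, i.e. a compact
   subgroup of U(n) (closed subgroups of U(n) are Lie groups, Cartan). *)
Definition compact_unitary_group (R : realType) (n : nat)
    (G : set 'M[R[i]]_n) : Prop :=
  [/\ compact G, G 1%:M,
      (forall A B, G A -> G B -> G (A *m B)),
      (forall A, G A -> G (invmx A)) &
      (forall A, G A -> unitary A)].

(* eta is the normalized (left-invariant) Haar measure of G, seen as a Borel
   probability measure on the matrix space concentrated on G. *)
Definition normalized_haar (R : realType) (n : nat) (G : set 'M[R[i]]_n)
    (eta : probability (borelM R n) R) : Prop :=
  eta (G : set (borelM R n)) = 1%E /\
  forall Q : 'M[R[i]]_n, G Q ->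
    forall A : set (borelM R n), measurable A ->
      eta ((fun C : borelM R n => (Q *m C : borelM R n)) @^-1` A) = eta A.

Definition sqnorm (R : realType) (n : nat) (v : 'cV[R[i]]_n) : R :=
  \sum_(k < n) (complex.Re (v k ord0) ^+ 2 + complex.Im (v k ord0) ^+ 2).

Section Kernels.
Variables (R : realType) (n N : nat) (G : set 'M[R[i]]_n)
  (eta : probability (borelM R n) R) (x : 'I_N -> 'cV[R[i]]_n) (eps : R).

Definition intG (f : 'M[R[i]]_n -> R) : R :=
  Rintegral eta (G : set (borelM R n)) (f : borelM R n -> R).

Definition Wk (i j : 'I_N) (A B : 'M[R[i]]_n) : R :=
  expR (- (sqnorm (A *m x i - B *m x j) / eps)).

Definition Dk (i : 'I_N) : R := \sum_(j < N) intG (fun C => Wk i j 1%:M C).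

Definition Pk (i j : 'I_N) (A B : 'M[R[i]]_n) : R := Wk i j A B / Dk i.

(* P^t; P^1 = P, P^t = P^(t-1) * P.  (The value at t = 0 is irrelevant.) *)
Fixpoint Pt (t : nat) : 'I_N -> 'I_N -> 'M[R[i]]_n -> 'M[R[i]]_n -> R :=
  match t with
  | 0 => Pk
  | t'.+1 =>
    if t' is 0 then Pk
    else fun i j A B =>
      \sum_(k < N) intG (fun C => Pt t' i k A C * Pk k j C B)
  end.

Definition oconv (f g : 'I_N -> 'M[R[i]]_n -> R) (k r : 'I_N)
    (Rm : 'M[R[i]]_n) : R :=
  intG (fun C => f k C * g r (C *m Rm)).

End Kernels.

From HB Require Import structures.
From mathcomp Require Import all_boot all_order all_algebra.
From mathcomp Require Import all_classical all_reals all_analysis.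
From mathcomp Require Import complex.
Import numFieldTopology.Exports numFieldNormedType.Exports.
Import Order.TTheory GRing.Theory Num.Theory.
Local Open Scope classical_set_scope.
Local Open Scope ring_scope.

Set Implicit Arguments.
Unset Strict Implicit.
Unset Printing Implicit Defensive.

(* Since G consists of unitary matrices, W_lk(UA, UB) = W_lk(A, B) for U in G.
   With x_j = Q x_i this gives W_jk(I, C) = W_ik(I, Q^-1 C); left invariance of
   the Haar measure then yields D_jj = D_ii and, by induction on t,
   P^t_jk(I, C) = P^t_ik(I, Q^-1 C).  The substitution C -> Q^-1 C in the
   convolution integral concludes.  The change of variables is proved for
   arbitrary, not necessarily measurable, integrands by matching the suprema
   over simple functions that define the Lebesgue integral. *)

Lemma mx_normP (K : numDomainType) m n (M : 'M[K]_(m, n)) r : 0 <= r ->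
  reflect (forall i j, `|M i j| <= r) (`|M| <= r).
Proof.
move=> /nonnegP[{}r]; rewrite [leLHS]/Num.norm /= mx_normE num_le.
apply: (iffP (bigmax_leP _ _ _ _)) => [[_ Mr] i j|Mr].
  exact: (Mr (i, j)).
by split=> [|[i j] _]; [change (0 <= r%:num); exact: ge0|exact: Mr].
Qed.

Lemma mx_entry_le_norm (K : numDomainType) m n (M : 'M[K]_(m, n)) i j :
  `|M i j| <= `|M|.
Proof. by move: i j; apply/(mx_normP _ (normr_ge0 M)). Qed.

Lemma normr_mulmx_le (K : numDomainType) m n p
    (M : 'M[K]_(m, n)) (C : 'M[K]_(n, p)) :
  `|M *m C| <= `|M| * `|C| *+ n.
Proof.
apply/mx_normP => [|i j]; first by rewrite mulrn_wge0 ?mulr_ge0.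
rewrite mxE; apply: le_trans (ler_norm_sum _ _ _) _.
rewrite -[n in _ *+ n]card_ord -sumr_const; apply: ler_sum => k _.
by rewrite normrM; apply: ler_pM; rewrite ?mx_entry_le_norm.
Qed.

Lemma mulmx_continuous (K : numFieldType) m n p (M : 'M[K]_(m, n)) :
  continuous (fun C : 'M[K]_(n, p) => M *m C).
Proof.
move=> C; apply/(@cvgrPdist_lt _ _ _ _ (nbhs_filter C)) => e e0.
have Mn1_gt0 : 0 < 1 + `|M| *+ n by rewrite ltr_pwDl // mulrn_wge0.
near=> D; rewrite -mulmxBr; apply: le_lt_trans (normr_mulmx_le _ _) _.
rewrite -mulrnAl; apply: (@le_lt_trans _ _ ((1 + `|M| *+ n) * `|C - D|)).
  by rewrite ler_wpM2r // lerDr.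
rewrite -ltr_pdivlMl //; near: D; apply: cvgr_dist_lt => //.
by rewrite mulr_gt0 ?invr_gt0.
Unshelve. all: by end_near. Qed.

Lemma continuous_measurable_fun (X Y : ptopologicalType) (f : X -> Y) :
  continuous f ->
  measurable_fun setT
    (f : g_sigma_algebraType (@open X) -> g_sigma_algebraType (@open Y)).
Proof.
move=> cf; apply: measurability => // _ [U oU <-].
by apply: sub_sigma_algebra; rewrite setTI; exact: open_comp.
Qed.

Lemma mulmx_measurable (R : realType) n (M : 'M[R[i]]_n) :
  measurable_fun setT (fun C : borelM R n => (M *m C : borelM R n)).
Proof. apply: continuous_measurable_fun; exact: mulmx_continuous. Qed.

Import HBNNSimple.

Section nnsfun_comp.
Context d d' (T : measurableType d) (T' : measurableType d') (R : realType).
Variables (c : T -> T') (mc : measurable_fun setT c) (h : {nnsfun T' >-> R}).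

Let hc : T -> R := h \o c.

HB.instance Definition _ := isMeasurableFun.Build _ _ _ _ hc
  (measurableT_comp (measurable_funPT h) mc).

Let hc_fin_range : finite_set (range hc).
Proof.
apply: sub_finite_set (fimfunP h) => _ [t _ <-]; exists (c t) => //.
Qed.
HB.instance Definition _ := FiniteImage.Build T R hc hc_fin_range.

Let hc_ge0 t : 0 <= hc t. Proof. exact: fun_ge0. Qed.
HB.instance Definition _ := isNonNegFun.Build T R hc hc_ge0.

Definition comp_nnsfun : {nnsfun T >-> R} := hc.

End nnsfun_comp.

Lemma sintegral_comp d d' (T : measurableType d) (T' : measurableType d')
    (R : realType) (mu : set T -> \bar R) (nu : set T' -> \bar R)
    (c : T -> T') (mc : measurable_fun setT c) (h : {nnsfun T' >-> R}) :
  (forall A, measurable A -> mu (c @^-1` A) = nu A) ->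
  sintegral mu (comp_nnsfun mc h) = sintegral nu h.
Proof.
move=> muc; apply: eq_fsbigr => r _; congr (_ * _)%E.
by rewrite -[RHS]muc //; exact: measurable_funPTI.
Qed.

Section integral_comp.
Context d d' (T : measurableType d) (T' : measurableType d') (R : realType).
Variables (mu : set T -> \bar R) (nu : set T' -> \bar R).
Variables (phi : T -> T') (psi : T' -> T).
Hypotheses (phiK : cancel phi psi) (psiK : cancel psi phi).
Hypotheses (mphi : measurable_fun setT phi) (mpsi : measurable_fun setT psi).
Hypothesis mu_phi : forall A, measurable A -> mu (phi @^-1` A) = nu A.

Let nu_psi A : measurable A -> nu (psi @^-1` A) = mu A.
Proof.
move=> mA; rewrite -mu_phi; last by rewrite -[_ @^-1` _]setTI; exact: mpsi.
by congr mu; apply/seteqP; split=> t; rewrite /preimage /= phiK.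
Qed.

Let sup_sintegral_comp (f : T' -> \bar R) :
  ereal_sup [set sintegral mu h | h in
    [set h : {nnsfun T >-> R} | forall t, ((h t)%:E <= f (phi t))%E]] =
  ereal_sup [set sintegral nu h | h in
    [set h : {nnsfun T' >-> R} | forall t, ((h t)%:E <= f t)%E]].
Proof.
congr ereal_sup; apply/seteqP; split=> _ [h hf <-].
- exists (comp_nnsfun mpsi h); last exact: sintegral_comp.
  by move=> t /=; rewrite -[t in f t]psiK; exact: hf.
- exists (comp_nnsfun mphi h); last exact: sintegral_comp.
  by move=> t; exact: hf.
Qed.

Lemma integral_comp (D : set T') (f : T' -> \bar R) :
  (\int[mu]_(t in phi @^-1` D) f (phi t) = \int[nu]_(t in D) f t)%E.
Proof.
rewrite /integral.
have -> : (fun t => f (phi t)) \_ (phi @^-1` D) = (f \_ D) \o phi.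
  by apply/funext => t; rewrite /patch /= /preimage.
by rewrite funepos_comp funeneg_comp !sup_sintegral_comp.
Qed.

End integral_comp.

Lemma adjME (R : realType) n (A : 'M[R[i]]_n) : adjM A = map_mx conjc A^T.
Proof. by apply/matrixP => a b; rewrite !mxE; case: (A b a). Qed.

Lemma sqnormE (R : realType) n (v : 'cV[R[i]]_n) :
  sqnorm v = complex.Re ((map_mx conjc v^T *m v) ord0 ord0).
Proof.
rewrite /sqnorm mxE (big_morph (@complex.Re R) (id1 := 0) (op1 := +%R)) //.
  apply: eq_bigr => k _; rewrite !mxE.
  by case: (v k ord0) => a b /=; rewrite mulNr opprK.
by move=> [a b] [c e].
Qed.

Lemma sqnorm_unitary (R : realType) n (U : 'M[R[i]]_n) (v : 'cV[R[i]]_n) :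
  unitary U -> sqnorm (U *m v) = sqnorm v.
Proof.
rewrite /unitary adjME => UU.
by rewrite !sqnormE trmx_mul map_mxM -mulmxA (mulmxA _ U) UU mul1mx.
Qed.

Lemma unitary_unit (R : realType) n (U : 'M[R[i]]_n) :
  unitary U -> U \in unitmx.
Proof. by case/mulmx1_unit. Qed.

Section kernel_invariance.
Variables (R : realType) (n N : nat) (G : set 'M[R[i]]_n)
  (eta : probability (borelM R n) R) (eps : R) (x : 'I_N -> 'cV[R[i]]_n).
Hypotheses (HG : compact_unitary_group G) (Heta : normalized_haar G eta).

Let unitaryG A : G A -> unitary A. Proof. by case: HG => _ _ _ _; apply. Qed.
Let invG A : G A -> G (invmx A). Proof. by case: HG => _ _ _ + _; apply. Qed.

Lemma eq_intG (f g : 'M[R[i]]_n -> R) : f =1 g -> intG G eta f = intG G eta g.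
Proof. by move/funext->. Qed.

Lemma intG_mulmx (M : 'M[R[i]]_n) (f : 'M[R[i]]_n -> R) : G M ->
  intG G eta (fun C => f (M *m C)) = intG G eta f.
Proof.
move=> GM; have uM := unitary_unit (unitaryG GM).
have GMC C : G (M *m C) <-> G C.
  case: HG => _ _ GmulG _ _; split=> [|GC]; last exact: GmulG.
  by rewrite -{2}(mulKmx uM C); exact/GmulG/invG.
rewrite /intG /Rintegral; congr fine.
have GE : (fun C : borelM R n => (M *m C : borelM R n)) @^-1` G = G.
  by apply/seteqP; split=> C /GMC.
rewrite -{1}GE.
apply: (integral_comp
  (psi := fun C : borelM R n => (invmx M *m C : borelM R n))).
- exact: mulKmx.
- exact: mulKVmx.
- exact: mulmx_measurable.
- exact: mulmx_measurable.
- by case: Heta => _ /(_ M GM).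
Qed.

Lemma Wk_unitaryl l k (U A B : 'M[R[i]]_n) : unitary U ->
  Wk x eps l k (U *m A) (U *m B) = Wk x eps l k A B.
Proof. by move=> UU; rewrite /Wk -!mulmxA -mulmxBr sqnorm_unitary. Qed.

Lemma Pk_unitaryl l k (U A B : 'M[R[i]]_n) : unitary U ->
  Pk G eta x eps l k (U *m A) (U *m B) = Pk G eta x eps l k A B.
Proof. by move=> UU; rewrite /Pk Wk_unitaryl. Qed.

Lemma PtSS t l k A B :
  Pt G eta x eps t.+2 l k A B =
  \sum_(m < N)
    intG G eta (fun C => Pt G eta x eps t.+1 l m A C * Pk G eta x eps m k C B).
Proof. by []. Qed.

Section orbit.
Variables (i j : 'I_N) (Q : 'M[R[i]]_n).
Hypotheses (GQ : G Q) (xjQ : x j = Q *m x i).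

Let GQ' : G (invmx Q). Proof. exact: invG. Qed.

Lemma Wk_orbit k C : Wk x eps j k 1%:M C = Wk x eps i k 1%:M (invmx Q *m C).
Proof.
have uQ : Q \in unitmx by exact/unitary_unit/unitaryG.
rewrite -[RHS](Wk_unitaryl _ _ _ _ (unitaryG GQ)) mulmx1 mulmxA (mulmxV uQ).
by rewrite /Wk !mul1mx xjQ.
Qed.

Lemma Dk_orbit : Dk G eta x eps j = Dk G eta x eps i.
Proof.
apply: eq_bigr => k _; rewrite -[RHS](intG_mulmx _ GQ').
by apply: eq_intG => C; exact: Wk_orbit.
Qed.

Lemma Pk_orbit k C :
  Pk G eta x eps j k 1%:M C = Pk G eta x eps i k 1%:M (invmx Q *m C).
Proof. by rewrite /Pk Wk_orbit Dk_orbit. Qed.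

Lemma Pt_orbit t k C :
  Pt G eta x eps t j k 1%:M C = Pt G eta x eps t i k 1%:M (invmx Q *m C).
Proof.
elim: t k C => [|[|t] IHt] k C; try exact: Pk_orbit.
rewrite !PtSS; apply: eq_bigr => l _; rewrite -[RHS](intG_mulmx _ GQ').
apply: eq_intG => D.
by rewrite IHt Pk_unitaryl //; exact: unitaryG.
Qed.

Lemma oconv_orbit t k r Rm :
  oconv G eta (fun k C => Pt G eta x eps t j k 1%:M C)
              (fun k C => Pt G eta x eps t j k 1%:M C) k r Rm =
  oconv G eta (fun k C => Pt G eta x eps t i k 1%:M C)
              (fun k C => Pt G eta x eps t i k 1%:M C) k r Rm.
Proof.
rewrite /oconv -[RHS](intG_mulmx _ GQ'); apply: eq_intG => C.
by rewrite !Pt_orbit mulmxA.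
Qed.

End orbit.
End kernel_invariance.

Theorem proposition2 (R : realType) (n N : nat) (G : set 'M[R[i]]_n)
  (eta : probability (borelM R n) R) (eps : R) (x : 'I_N -> 'cV[R[i]]_n)
  (t : nat) (i j : 'I_N) (Q : 'M[R[i]]_n) :
  compact_unitary_group G ->
  normalized_haar G eta ->
  0 < eps ->
  injective x ->
  (forall (l : 'I_N) (A : 'M[R[i]]_n), G A -> A != 1%:M -> A *m x l != x l) ->
  (0 < t)%N ->
  G Q -> x j = Q *m x i ->
  forall (k r : 'I_N) (Rm : 'M[R[i]]_n), G Rm ->
    oconv G eta (fun k C => Pt G eta x eps t i k 1%:M C)
                (fun k C => Pt G eta x eps t i k 1%:M C) k r Rm =
    oconv G eta (fun k C => Pt G eta x eps t j k 1%:M C)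
                (fun k C => Pt G eta x eps t j k 1%:M C) k r Rm.
Proof.
move=> HG Heta _ _ _ _ GQ xjQ k r Rm _.
exact/esym/(oconv_orbit eps HG Heta GQ xjQ).
Qed.
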